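(* Let $a\in(0,1)$, $r\ge1$, $\kappa_1\in(a,1)$, and assume $r\le \dfrac{as}{\sqrt{5\log\big(2/(1-a/\kappa_1)\big)}}$. Then for every $\theta\in\mathcal{D}_{a,r}$, $$\langle M(\theta),\theta^*\rangle\ge (a/\kappa_1)\|\theta^*\|^2 .$$
   Context: Fix $d\ge1$, $\sigma>0$ and $\theta^*\in\mathbb{R}^d\setminus\{0\}$. Let $Y$ be distributed according to the mixture $\tfrac12 N(\theta^*,\sigma^2I_d)+\tfrac12 N(-\theta^*,\sigma^2I_d)$. Let $\omega(t):=1/(1+e^{-2t})$. The population EM operator is $M(\theta):=2\,\mathbb{E}\big[Y\,\omega(\langle\theta,Y\rangle/\sigma^2)\big]$. The signal-to-noise ratio is $s:=\|\theta^*\|/\sigma$. For $a\in(0,1)$ and $r\ge1$ define $\mathcal{H}_a:=\{\theta:\langle\theta,\theta^*\rangle\ge a\|\theta^*\|^2\}$, $\mathcal{B}_r:=\{\theta:\|\theta\|\le r\|\theta^*\|\}$ and $\mathcal{D}_{a,r}:=\mathcal{H}_a\cap\mathcal{B}_r$. *)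

From Stdlib Require Import Reals Lra.
Open Scope R_scope.

(* Vectors of R^d are represented as functions nat -> R; only coordinates
   0..d-1 are meaningful. *)
Definition inner (d : nat) (u v : nat -> R) : R :=
  match d with O => 0 | S d' => sum_f_R0 (fun i => u i * v i) d' end.

Definition norm (d : nat) (u : nat -> R) : R := sqrt (inner d u u).

Definition improper_int (f : R -> R) (l : R) : Prop :=
  (forall a b, a <= b -> inhabited (Riemann_integrable f a b)) /\
  (forall eps, 0 < eps -> exists A, 0 < A /\
     forall a b (pr : Riemann_integrable f a b),
       a <= - A -> A <= b -> Rabs (RiemannInt pr - l) < eps).

(* Iterated improper integral over R^d of F : (nat -> R) -> R,
   integrating coordinate 0 outermost. [iint d F l] means the integral
   exists and equals l. *)
Definition vcons (x : R) (v : nat -> R) : nat -> R :=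
  fun i => match i with O => x | S k => v k end.

Fixpoint iint (d : nat) (F : (nat -> R) -> R) (l : R) : Prop :=
  match d with
  | O => l = F (fun _ => 0)
  | S d' => exists g : R -> R, improper_int g l /\
              forall x, iint d' (fun v => F (vcons x v)) (g x)
  end.

Definition gauss_density (d : nat) (sigma : R) (mu y : nat -> R) : R :=
  exp (- inner d (fun i => y i - mu i) (fun i => y i - mu i) / (2 * sigma ^ 2))
  / (sqrt (2 * PI * sigma ^ 2)) ^ d.

Definition mix_density (d : nat) (sigma : R) (theta_star y : nat -> R) : R :=
  / 2 * gauss_density d sigma theta_star y
  + / 2 * gauss_density d sigma (fun i => - theta_star i) y.

Definition omega (t : R) : R := / (1 + exp (- (2 * t))).

(* [is_EM d sigma theta_star theta m] : m = M(theta) = 2 E[Y omega(<theta,Y>/sigma^2)],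
   coordinatewise, the expectation written as an integral against the
   mixture density. *)
Definition is_EM (d : nat) (sigma : R) (theta_star theta m : nat -> R) : Prop :=
  forall j, (j < d)%nat ->
    iint d (fun y => 2 * (y j * omega (inner d theta y / sigma ^ 2))
                     * mix_density d sigma theta_star y) (m j).

Definition snr (d : nat) (sigma : R) (theta_star : nat -> R) : R :=
  norm d theta_star / sigma.

Definition in_H (d : nat) (a : R) (theta_star theta : nat -> R) : Prop :=
  inner d theta theta_star >= a * norm d theta_star ^ 2.

Definition in_B (d : nat) (r : R) (theta_star theta : nat -> R) : Prop :=
  norm d theta <= r * norm d theta_star.

Definition in_D (d : nat) (a r : R) (theta_star theta : nat -> R) : Prop :=
  in_H d a theta_star theta /\ in_B d r theta_star theta.

(* Write [Z = <Y, theta_star>] and [t = <theta, Y> / sigma^2]; then [<M(theta), theta_star>]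
   is the integral of [Z omega(t)] against [phi+ + phi-], the densities of
   [N(+-theta_star, sigma^2 I)].  For [mu > 0] and [0 <= lam <= 1], the inequalities
   [z <= exp(mu z - 1) / mu] and [omega(t) <= exp(2 lam t)] give, with [K = 1 / (e mu)]
   and [w = mu theta_star - (2 lam / sigma^2) theta] (so that [<w, Y> = mu Z - 2 lam t]),
     [Z omega(t) >= Z - K exp <w, Y>]   and   [Z omega(t) >= - K exp (- <w, Y>)].
   Integrating the first against [phi+] and the second against [phi-] with the Gaussian
   moment generating function yields
     [<M(theta), theta_star> >= |theta_star|^2 - 2 K exp (<w, theta_star> + sigma^2 |w|^2 / 2)].
   For [mu = 1 / |theta_star|^2] and [lam = a / (2 r^2)], membership in [D_{a,r}] and the
   SNR condition bound the exponent by [1 - ln (2 / (1 - a / kappa1))], so the remainder is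
   at most [(1 - a / kappa1) |theta_star|^2]. *)

From Pilot Require Import Defs.
From Stdlib Require Import Reals Lra Lia.
From Coquelicot Require Coquelicot.
Open Scope R_scope.

Lemma exp_le_compat x y : x <= y -> exp x <= exp y.
Proof. intros [H | ->]; [left; apply exp_increasing, H | right; reflexivity]. Qed.

(* Coquelicot is imported only inside this module, as its [norm] would shadow [Defs.norm]. *)
Module RealLine.
Import Coquelicot.Coquelicot.

(* Side goals of [RInt_ext] are equalities in a Coquelicot carrier; restate them in [R] so
   that [ring] and [field] apply. *)
Ltac eq_in_R := match goal with |- ?a = ?b => change (@eq R a b) end.

Lemma ex_RInt_continuous_R (f : R -> R) a b :
  (forall x, continuity_pt f x) -> ex_RInt f a b.
Proof.
  intros Hf. apply (ex_RInt_continuous (V := R_CompleteNormedModule)).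
  intros x _. apply continuity_pt_filterlim, Hf.
Qed.

Lemma derive_zero_const (f : R -> R) x :
  (forall y, is_derive f y 0) -> f x = f 0.
Proof.
  intros Hf.
  assert (H : is_RInt (V := R_CompleteNormedModule) (fun _ => 0) 0 x (minus (f x) (f 0))).
  { apply (is_RInt_derive (V := R_CompleteNormedModule) f); intros;
      [apply Hf | apply continuous_const]. }
  apply is_RInt_unique in H. rewrite RInt_const in H.
  unfold minus, plus, opp, scal in H; simpl in H. unfold mult in H; simpl in H.
  lra.
Qed.

Definition gauss (u : R) : R := exp (- (u * u)).

(* With [F x = RInt gauss 0 x] and [G] below, [F^2 + G] has zero derivative and
   equals [PI/4] at [0], while [0 <= G x <= gauss x]; so [F] tends to [sqrt PI / 2]. *)
Definition gauss_RInt0 (x : R) : R := RInt gauss 0 x.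

Definition gauss_companion_integrand (x t : R) : R :=
  exp (- (x * x) * (1 + t * t)) / (1 + t * t).

Definition gauss_companion (x : R) : R := RInt (gauss_companion_integrand x) 0 1.

Lemma continuity_pt_gauss x : continuity_pt gauss x.
Proof. unfold gauss. reg. Qed.

Lemma ex_RInt_gauss a b : ex_RInt gauss a b.
Proof. apply ex_RInt_continuous_R, continuity_pt_gauss. Qed.

Lemma is_derive_gauss_RInt0 x : is_derive gauss_RInt0 x (gauss x).
Proof.
  apply is_derive_RInt with (a := 0).
  - apply filter_forall. intros b.
    apply (RInt_correct (V := R_CompleteNormedModule)), ex_RInt_gauss.
  - apply continuity_pt_filterlim, continuity_pt_gauss.
Qed.

Lemma one_add_sqr_pos t : 0 < 1 + t * t.
Proof. nra. Qed.

Lemma is_derive_gauss_companion_integrand x t :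
  is_derive (fun z => gauss_companion_integrand z t) x
    (-2 * x * exp (- (x * x) * (1 + t * t))).
Proof.
  pose proof (one_add_sqr_pos t).
  unfold gauss_companion_integrand. auto_derive; [lra | field; lra].
Qed.

Lemma Derive_gauss_companion_integrand x t :
  Derive (fun z => gauss_companion_integrand z t) x
  = -2 * x * exp (- (x * x) * (1 + t * t)).
Proof. apply is_derive_unique, is_derive_gauss_companion_integrand. Qed.

Lemma ex_RInt_gauss_companion_integrand x a b :
  ex_RInt (gauss_companion_integrand x) a b.
Proof.
  apply ex_RInt_continuous_R. intros t. pose proof (one_add_sqr_pos t).
  unfold gauss_companion_integrand. reg. lra.
Qed.

Lemma is_derive_gauss_companion x :
  is_derive gauss_companion x (RInt (fun t => -2 * x * exp (- (x * x) * (1 + t * t))) 0 1).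
Proof.
  unfold gauss_companion.
  rewrite <- (RInt_ext (fun t => Derive (fun u => gauss_companion_integrand u t) x)).
  2:{ intros; apply Derive_gauss_companion_integrand. }
  apply (is_derive_RInt_param gauss_companion_integrand 0 1 x).
  - apply filter_forall. intros y t _. eexists; apply is_derive_gauss_companion_integrand.
  - intros t _. eapply continuity_2d_pt_ext.
    { intros u v. symmetry. apply Derive_gauss_companion_integrand. }
    apply continuity_2d_pt_mult; [apply continuity_2d_pt_mult|].
    + apply continuity_2d_pt_const.
    + apply continuity_2d_pt_id1.
    + apply continuity_1d_2d_pt_comp; [apply derivable_continuous_pt, derivable_pt_exp|].
      apply continuity_2d_pt_mult.
      * apply continuity_2d_pt_opp, continuity_2d_pt_mult; apply continuity_2d_pt_id1.
      * apply continuity_2d_pt_plus; [apply continuity_2d_pt_const|].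
        apply continuity_2d_pt_mult; apply continuity_2d_pt_id2.
  - apply filter_forall. intros y. apply ex_RInt_gauss_companion_integrand.
Qed.

(* The substitution [u = x t] turns the derivative above into [-2 gauss x * gauss_RInt0 x]. *)
Lemma is_derive_gauss_companion_RInt0 x :
  is_derive gauss_companion x (-2 * gauss x * gauss_RInt0 x).
Proof.
  replace (-2 * gauss x * gauss_RInt0 x)
    with (RInt (fun t => -2 * x * exp (- (x * x) * (1 + t * t))) 0 1);
    [apply is_derive_gauss_companion|].
  rewrite (RInt_ext _ (fun t => (-2 * gauss x) * (x * gauss (x * t + 0)))).
  2:{ intros t _. eq_in_R. unfold gauss.
      replace (- (x * x) * (1 + t * t)) with (- (x * x) + - ((x * t + 0) * (x * t + 0)))
        by ring.
      rewrite exp_plus. ring. }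
  rewrite (RInt_scal (V := R_CompleteNormedModule)).
  2:{ apply ex_RInt_continuous_R. intros. unfold gauss. reg. }
  rewrite (RInt_comp_lin (V := R_CompleteNormedModule)); [|apply ex_RInt_gauss].
  unfold gauss_RInt0, scal; simpl; unfold mult; simpl.
  f_equal. f_equal; ring.
Qed.

Lemma gauss_companion0 : gauss_companion 0 = PI / 4.
Proof.
  unfold gauss_companion.
  rewrite (RInt_ext _ (fun t => / (1 + t²))).
  2:{ intros t _. eq_in_R. unfold gauss_companion_integrand, Rsqr.
      replace (- (0 * 0) * (1 + t * t)) with 0 by ring. rewrite exp_0. field. nra. }
  assert (H : is_RInt (fun t : R => / (1 + t²)) 0 1 (minus (atan 1) (atan 0))).
  { apply (is_RInt_derive (V := R_CompleteNormedModule)).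
    - intros. apply is_derive_atan.
    - intros. apply continuity_pt_filterlim. reg. unfold Rsqr; nra. }
  rewrite (is_RInt_unique _ _ _ _ H).
  unfold minus, plus, opp; simpl. rewrite atan_1, atan_0. lra.
Qed.

Lemma gauss_RInt0_sqr_add x : gauss_RInt0 x * gauss_RInt0 x + gauss_companion x = PI / 4.
Proof.
  rewrite (derive_zero_const (fun x => gauss_RInt0 x * gauss_RInt0 x + gauss_companion x)).
  - unfold gauss_RInt0 at 1 2. rewrite RInt_point, gauss_companion0.
    unfold zero; simpl. ring.
  - intros y.
    replace 0 with (gauss y * gauss_RInt0 y + gauss_RInt0 y * gauss y
                    + (-2 * gauss y * gauss_RInt0 y)) by ring.
    apply (is_derive_plus (K := R_AbsRing) (V := R_NormedModule));
      [|apply is_derive_gauss_companion_RInt0].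
    apply (is_derive_mult (K := R_AbsRing)); try apply is_derive_gauss_RInt0.
    intros; simpl; apply Rmult_comm.
Qed.

Lemma gauss_companion_bounds x : 0 <= gauss_companion x <= gauss x.
Proof.
  unfold gauss_companion. split.
  - apply RInt_ge_0; [lra | apply ex_RInt_gauss_companion_integrand|].
    intros t _. unfold gauss_companion_integrand.
    apply Rdiv_le_0_compat; [left; apply exp_pos | apply one_add_sqr_pos].
  - apply Rle_trans with (RInt (fun _ => gauss x) 0 1).
    + apply RInt_le; [lra | apply ex_RInt_gauss_companion_integrand
                      | apply ex_RInt_const|].
      intros t Ht. unfold gauss_companion_integrand, gauss.
      pose proof (one_add_sqr_pos t).
      apply Rle_trans with (exp (- (x * x) * (1 + t * t))).
      * unfold Rdiv. rewrite <- (Rmult_1_r (exp _)) at 2.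
        apply Rmult_le_compat_l; [left; apply exp_pos|].
        rewrite <- Rinv_1. apply Rinv_le_contravar; nra.
      * apply exp_le_compat. nra.
    + rewrite RInt_const. unfold scal; simpl; unfold mult; simpl. lra.
Qed.

Lemma gauss_RInt0_ge0 x : 0 <= x -> 0 <= gauss_RInt0 x.
Proof.
  intros Hx. apply RInt_ge_0; [exact Hx | apply ex_RInt_gauss |].
  intros; left; apply exp_pos.
Qed.

Lemma gauss_RInt0_opp x : gauss_RInt0 (- x) = - gauss_RInt0 x.
Proof.
  unfold gauss_RInt0. replace (- x) with (-1 * x + 0) by ring.
  replace 0 with (-1 * 0 + 0) at 1 by ring.
  rewrite <- (RInt_comp_lin (V := R_CompleteNormedModule)); [|apply ex_RInt_gauss].
  rewrite (RInt_ext _ (fun y => -1 * gauss y)).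
  2:{ intros t _. eq_in_R. unfold gauss, scal; simpl; unfold mult; simpl.
      replace ((-1 * t + 0) * (-1 * t + 0)) with (t * t) by ring. ring. }
  rewrite (RInt_scal (V := R_CompleteNormedModule)); [|apply ex_RInt_gauss].
  unfold scal; simpl; unfold mult; simpl. ring.
Qed.

Lemma gauss_mul_le_1 x : 0 <= x -> gauss x * x <= 1.
Proof.
  intros Hx. unfold gauss. rewrite exp_Ropp.
  pose proof (exp_ineq1_le (x * x)). pose proof (exp_pos (x * x)).
  apply (Rmult_le_reg_l (exp (x * x))); [lra|].
  rewrite <- Rmult_assoc, Rinv_r by lra. nra.
Qed.

Lemma gauss_mul_abs_le_1 t : gauss t * Rabs t <= 1.
Proof.
  destruct (Rle_or_lt 0 t) as [Ht | Ht].
  - rewrite Rabs_right by lra. apply gauss_mul_le_1, Ht.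
  - rewrite Rabs_left by lra. unfold gauss.
    replace (- (t * t)) with (- (- t * - t)) by ring. apply gauss_mul_le_1. lra.
Qed.

Lemma gauss_RInt0_cvg eps : 0 < eps ->
  exists A, 0 < A /\ forall x, A <= x -> Rabs (gauss_RInt0 x - sqrt PI / 2) < eps.
Proof.
  intros Heps. assert (Hpi : 0 < sqrt PI) by apply sqrt_lt_R0, PI_RGT_0.
  assert (Hq : 0 < 4 / (sqrt PI * eps)) by (apply Rdiv_lt_0_compat; nra).
  exists (1 + 4 / (sqrt PI * eps)). split; [lra|]. intros x Hx.
  pose proof (gauss_RInt0_ge0 x ltac:(lra)).
  pose proof (gauss_RInt0_sqr_add x). pose proof (gauss_companion_bounds x).
  pose proof (gauss_mul_le_1 x ltac:(lra)).
  assert (HP : sqrt PI * sqrt PI = PI) by (apply sqrt_sqrt; left; apply PI_RGT_0).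
  assert (Hgap : (sqrt PI / 2 - gauss_RInt0 x) * (sqrt PI / 2) <= gauss x) by nra.
  assert (Hg : gauss x * 4 < sqrt PI * eps).
  { assert (gauss x * (4 / (sqrt PI * eps)) < 1).
    { assert (0 < gauss x) by apply exp_pos. nra. }
    apply (Rmult_lt_reg_r (/ (sqrt PI * eps))); [apply Rinv_0_lt_compat; nra|].
    rewrite Rinv_r by nra. unfold Rdiv in *. lra. }
  rewrite Rabs_left1 by nra. nra.
Qed.

Definition improper_RInt (f : R -> R) (l : R) : Prop :=
  (forall a b, ex_RInt f a b) /\
  (forall eps, 0 < eps -> exists A, 0 < A /\
     forall a b, a <= - A -> A <= b -> Rabs (RInt f a b - l) < eps).

Lemma improper_intP f l : improper_int f l <-> improper_RInt f l.
Proof.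
  split; intros [Hex Hcvg].
  - split.
    + intros a b. destruct (Rle_or_lt a b) as [Hab | Hab].
      * destruct (Hex a b Hab) as [pr]. apply ex_RInt_Reals_1, pr.
      * apply (ex_RInt_swap (V := R_NormedModule)).
        destruct (Hex b a (Rlt_le _ _ Hab)) as [pr]. apply ex_RInt_Reals_1, pr.
    + intros eps Heps. destruct (Hcvg eps Heps) as [A [HA HAl]].
      exists A; split; [exact HA|]. intros a b Ha Hb.
      destruct (Hex a b ltac:(lra)) as [pr]. rewrite (RInt_Reals _ _ _ pr). auto.
  - split.
    + intros a b _. constructor. apply ex_RInt_Reals_0, Hex.
    + intros eps Heps. destruct (Hcvg eps Heps) as [A [HA HAl]].
      exists A; split; [exact HA|]. intros a b pr Ha Hb. rewrite <- RInt_Reals. auto.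
Qed.

Lemma improper_RInt_ext f g l :
  (forall x, f x = g x) -> improper_RInt f l -> improper_RInt g l.
Proof.
  intros Efg [Hex Hcvg]. split.
  - intros a b. eapply ex_RInt_ext; [|apply (Hex a b)]. intros; apply Efg.
  - intros eps Heps. destruct (Hcvg eps Heps) as [A [HA HAl]].
    exists A; split; [exact HA|]. intros a b Ha Hb.
    rewrite <- (RInt_ext f); [auto | intros; apply Efg].
Qed.

Lemma improper_RInt_plus f g l1 l2 : improper_RInt f l1 -> improper_RInt g l2 ->
  improper_RInt (fun x => f x + g x) (l1 + l2).
Proof.
  intros [Fex Fcvg] [Gex Gcvg]. split.
  - intros a b. exact (ex_RInt_plus (V := R_NormedModule) f g a b (Fex a b) (Gex a b)).
  - intros eps Heps.
    destruct (Fcvg (eps / 2) ltac:(lra)) as [A [HA HAl]].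
    destruct (Gcvg (eps / 2) ltac:(lra)) as [B [HB HBl]].
    exists (Rmax A B). pose proof (Rmax_l A B); pose proof (Rmax_r A B).
    split; [lra|]. intros a b Ha Hb.
    rewrite (RInt_plus (V := R_CompleteNormedModule)) by auto.
    specialize (HAl a b ltac:(lra) ltac:(lra)). specialize (HBl a b ltac:(lra) ltac:(lra)).
    apply Rabs_def2 in HAl. apply Rabs_def2 in HBl.
    unfold plus; simpl. apply Rabs_def1; lra.
Qed.

Lemma improper_RInt_scal c f l :
  improper_RInt f l -> improper_RInt (fun x => c * f x) (c * l).
Proof.
  intros [Fex Fcvg].
  assert (Hc : 0 < Rabs c + 1) by (pose proof (Rabs_pos c); lra).
  split.
  - intros a b. exact (ex_RInt_scal (V := R_NormedModule) f a b c (Fex a b)).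
  - intros eps Heps.
    destruct (Fcvg (eps / (Rabs c + 1))) as [A [HA HAl]]; [apply Rdiv_lt_0_compat; lra|].
    exists A; split; [exact HA|]. intros a b Ha Hb.
    rewrite (RInt_scal (V := R_CompleteNormedModule)) by auto.
    specialize (HAl a b Ha Hb). unfold scal; simpl; unfold mult; simpl.
    replace (c * RInt f a b - c * l) with (c * (RInt f a b - l)) by ring.
    rewrite Rabs_mult. pose proof (Rabs_pos (RInt f a b - l)).
    apply Rle_lt_trans with ((Rabs c + 1) * Rabs (RInt f a b - l)); [nra|].
    apply (Rmult_lt_reg_l (/ (Rabs c + 1))); [apply Rinv_0_lt_compat; lra|].
    rewrite <- Rmult_assoc, Rinv_l by lra. unfold Rdiv in HAl. lra.
Qed.

Lemma improper_RInt_le f g l1 l2 : (forall x, f x <= g x) ->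
  improper_RInt f l1 -> improper_RInt g l2 -> l1 <= l2.
Proof.
  intros Hfg [Fex Fcvg] [Gex Gcvg].
  destruct (Rle_or_lt l1 l2) as [H | H]; [exact H|].
  destruct (Fcvg ((l1 - l2) / 2) ltac:(lra)) as [A [HA HAl]].
  destruct (Gcvg ((l1 - l2) / 2) ltac:(lra)) as [B [HB HBl]].
  set (C := Rmax A B). pose proof (Rmax_l A B); pose proof (Rmax_r A B).
  specialize (HAl (- C) C ltac:(unfold C; lra) ltac:(unfold C; lra)).
  specialize (HBl (- C) C ltac:(unfold C; lra) ltac:(unfold C; lra)).
  assert (RInt f (- C) C <= RInt g (- C) C) by (apply RInt_le; auto; unfold C; lra).
  apply Rabs_def2 in HAl. apply Rabs_def2 in HBl. lra.
Qed.

Lemma improper_RInt_comp_lin f l u w : 0 < u ->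
  improper_RInt f l -> improper_RInt (fun y => f (u * y + w)) (l / u).
Proof.
  intros Hu [Fex Fcvg].
  assert (HR : forall a b, RInt (fun y => f (u * y + w)) a b
                           = / u * RInt f (u * a + w) (u * b + w)).
  { intros a b. rewrite <- (RInt_comp_lin (V := R_CompleteNormedModule)) by apply Fex.
    rewrite <- (RInt_scal (V := R_CompleteNormedModule)).
    2: exact (ex_RInt_comp_lin f u w a b (Fex _ _)).
    apply RInt_ext. intros; unfold scal; simpl; unfold mult; simpl. field. lra. }
  split.
  - intros a b. eapply ex_RInt_ext.
    2: exact (ex_RInt_scal (V := R_NormedModule) _ a b (/ u)
                (ex_RInt_comp_lin f u w a b (Fex _ _))).
    intros; unfold scal; simpl; unfold mult; simpl. field. lra.
  - intros eps Heps. destruct (Fcvg (eps * u) ltac:(nra)) as [A [HA HAl]].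
    pose proof (Rabs_pos w). pose proof (Rle_abs w). pose proof (Rle_abs (- w)).
    rewrite Rabs_Ropp in *.
    assert (Hq : 0 <= (A + Rabs w) / u) by (apply Rdiv_le_0_compat; lra).
    exists ((A + Rabs w) / u + 1). split; [lra|]. intros a b Ha Hb.
    assert (Ea : u * ((A + Rabs w) / u + 1) = A + Rabs w + u) by (field; lra).
    specialize (HAl (u * a + w) (u * b + w) ltac:(nra) ltac:(nra)).
    rewrite HR.
    replace (/ u * RInt f (u * a + w) (u * b + w) - l / u)
      with (/ u * (RInt f (u * a + w) (u * b + w) - l)) by (field; lra).
    rewrite Rabs_mult, Rabs_right by (left; apply Rinv_0_lt_compat; lra).
    apply (Rmult_lt_reg_l u); [exact Hu|]. rewrite <- Rmult_assoc, Rinv_r by lra. lra.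
Qed.

Lemma improper_RInt_gauss : improper_RInt gauss (sqrt PI).
Proof.
  split; [apply ex_RInt_gauss|].
  intros eps Heps. destruct (gauss_RInt0_cvg (eps / 2) ltac:(lra)) as [A [HA HAl]].
  exists A; split; [exact HA|]. intros a b Ha Hb.
  assert (E : RInt gauss a b = gauss_RInt0 b + gauss_RInt0 (- a)).
  { rewrite gauss_RInt0_opp. unfold gauss_RInt0.
    rewrite <- (RInt_Chasles (V := R_CompleteNormedModule) gauss a 0 b) by apply ex_RInt_gauss.
    rewrite <- (opp_RInt_swap (V := R_CompleteNormedModule)) by apply ex_RInt_gauss.
    unfold plus, opp; simpl. ring. }
  rewrite E. pose proof (HAl b Hb) as Hb'. pose proof (HAl (- a) ltac:(lra)) as Ha'.
  apply Rabs_def2 in Ha'. apply Rabs_def2 in Hb'. apply Rabs_def1; lra.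
Qed.

Definition normal_pdf (s m x : R) : R :=
  exp (- ((x - m) * (x - m)) / (2 * s ^ 2)) / sqrt (2 * PI * s ^ 2).

Lemma sqrt2_gt0 : 0 < sqrt 2.
Proof. apply sqrt_lt_R0; lra. Qed.

Section NormalPdf.
Variable s : R.
Hypothesis s_gt0 : 0 < s.

Lemma sqrt_normal_const : sqrt (2 * PI * s ^ 2) = sqrt PI * (s * sqrt 2).
Proof.
  rewrite (Rmult_comm 2 PI), Rmult_assoc, sqrt_mult_alt by (left; apply PI_RGT_0).
  f_equal. rewrite sqrt_mult_alt by lra.
  rewrite <- (sqrt_pow2 s) at 2 by lra. simpl. rewrite Rmult_1_r. ring.
Qed.

Lemma normal_const_gt0 : 0 < sqrt (2 * PI * s ^ 2).
Proof.
  rewrite sqrt_normal_const.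
  apply Rmult_lt_0_compat; [apply sqrt_lt_R0, PI_RGT_0 |].
  apply Rmult_lt_0_compat; [exact s_gt0 | apply sqrt2_gt0].
Qed.

Lemma normal_pdf_gauss m x :
  normal_pdf s m x = gauss ((x - m) / (s * sqrt 2)) / sqrt (2 * PI * s ^ 2).
Proof.
  unfold normal_pdf, gauss. f_equal. f_equal.
  assert (E2 : sqrt 2 * sqrt 2 = 2) by (apply sqrt_sqrt; lra).
  pose proof sqrt2_gt0. field_simplify_eq; [|nra].
  replace (sqrt 2 ^ 2) with 2 by (simpl; lra). ring.
Qed.

Lemma improper_RInt_normal_pdf m : improper_RInt (normal_pdf s m) 1.
Proof.
  pose proof sqrt2_gt0. set (u := / (s * sqrt 2)).
  assert (Hu : 0 < u) by (apply Rinv_0_lt_compat; nra).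
  pose proof normal_const_gt0.
  apply improper_RInt_ext with (fun x => / sqrt (2 * PI * s ^ 2) * gauss (u * x + - m * u)).
  { intros x. rewrite normal_pdf_gauss. unfold u, Rdiv. rewrite Rmult_comm.
    do 2 f_equal. ring. }
  replace 1 with (/ sqrt (2 * PI * s ^ 2) * (sqrt PI / u)).
  - apply improper_RInt_scal, improper_RInt_comp_lin; [exact Hu | apply improper_RInt_gauss].
  - rewrite sqrt_normal_const. unfold u. pose proof (sqrt_lt_R0 _ PI_RGT_0).
    field. split; lra.
Qed.

Lemma normal_pdf_tail m delta : 0 < delta ->
  exists A, 0 < A /\ forall x, A <= Rabs x -> normal_pdf s m x < delta.
Proof.
  intros Hdelta. pose proof normal_const_gt0 as HK. pose proof sqrt2_gt0.
  set (B := s * sqrt 2 / sqrt (2 * PI * s ^ 2)).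
  assert (HB : 0 < B) by (apply Rdiv_lt_0_compat; nra).
  assert (HBd : delta * (B / delta) = B) by (field; lra).
  exists (Rabs m + B / delta + 1). pose proof (Rabs_pos m).
  assert (0 < B / delta) by (apply Rdiv_lt_0_compat; lra).
  split; [lra|]. intros x Hx.
  assert (Hxm : B / delta + 1 <= Rabs (x - m)) by (pose proof (Rabs_triang_inv x m); lra).
  set (g := gauss ((x - m) / (s * sqrt 2))).
  assert (Hg : g * Rabs (x - m) <= s * sqrt 2).
  { pose proof (gauss_mul_abs_le_1 ((x - m) / (s * sqrt 2))) as Hgt. fold g in Hgt.
    unfold Rdiv in Hgt. rewrite Rabs_mult, Rabs_inv, (Rabs_right (s * sqrt 2)) in Hgt by nra.
    replace (g * Rabs (x - m)) with (g * (Rabs (x - m) * / (s * sqrt 2)) * (s * sqrt 2))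
      by (field; nra).
    apply Rle_trans with (1 * (s * sqrt 2)); [apply Rmult_le_compat_r; nra | lra]. }
  assert (Hmul : normal_pdf s m x * Rabs (x - m) <= B).
  { rewrite normal_pdf_gauss. fold g. unfold B, Rdiv.
    replace (g * / sqrt (2 * PI * s ^ 2) * Rabs (x - m))
      with (g * Rabs (x - m) * / sqrt (2 * PI * s ^ 2)) by ring.
    apply Rmult_le_compat_r; [left; apply Rinv_0_lt_compat|]; lra. }
  nra.
Qed.

Lemma improper_RInt_normal_pdf_centered m :
  improper_RInt (fun x => (x - m) * normal_pdf s m x) 0.
Proof.
  assert (Hs2 : 0 < s ^ 2) by (apply pow_lt; lra).
  pose proof normal_const_gt0 as HK.
  assert (Hpdf : forall x, 0 < normal_pdf s m x)
    by (intros; apply Rdiv_lt_0_compat; [apply exp_pos | exact HK]).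
  assert (Hderiv : forall x, is_derive (fun x => - s ^ 2 * normal_pdf s m x) x
                               ((x - m) * normal_pdf s m x)).
  { intros x. unfold normal_pdf. auto_derive; [lra|].
    replace (s * (s * 1)) with (s ^ 2) by ring. unfold Rminus, Rdiv. field. lra. }
  assert (HR : forall a b, RInt (fun x => (x - m) * normal_pdf s m x) a b
                           = s ^ 2 * (normal_pdf s m a - normal_pdf s m b)).
  { intros a b.
    assert (H := is_RInt_derive (V := R_CompleteNormedModule)
                   (fun x => - s ^ 2 * normal_pdf s m x) (fun x => (x - m) * normal_pdf s m x) a b).
    assert (H' : is_RInt (V := R_CompleteNormedModule) (fun x => (x - m) * normal_pdf s m x) a b
                   (minus (- s ^ 2 * normal_pdf s m b) (- s ^ 2 * normal_pdf s m a))).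
    { apply H; intros x _; [apply Hderiv|].
      apply continuity_pt_filterlim. unfold normal_pdf. reg. }
    rewrite (is_RInt_unique _ _ _ _ H'). unfold minus, plus, opp; simpl. ring. }
  split.
  - intros a b. apply ex_RInt_continuous_R. intros. unfold normal_pdf. reg.
  - intros eps Heps.
    destruct (normal_pdf_tail m (eps / (2 * s ^ 2))) as [A [HA HAl]];
      [apply Rdiv_lt_0_compat; lra|].
    exists A; split; [exact HA|]. intros a b Ha Hb. rewrite HR, Rminus_0_r.
    pose proof (HAl a ltac:(rewrite Rabs_left1; lra)).
    pose proof (HAl b ltac:(rewrite Rabs_right; lra)).
    pose proof (Hpdf a). pose proof (Hpdf b).
    assert (E : s ^ 2 * (eps / (2 * s ^ 2)) = eps / 2) by (field; lra).
    assert (Rabs (normal_pdf s m a - normal_pdf s m b) < eps / (2 * s ^ 2))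
      by (apply Rabs_def1; lra).
    rewrite Rabs_mult, Rabs_right by lra. nra.
Qed.

Lemma improper_RInt_normal_pdf_mean m :
  improper_RInt (fun x => x * normal_pdf s m x) m.
Proof.
  pose proof (improper_RInt_plus _ _ _ _
    (improper_RInt_scal m _ _ (improper_RInt_normal_pdf m))
    (improper_RInt_normal_pdf_centered m)) as H.
  rewrite Rmult_1_r, Rplus_0_r in H.
  eapply improper_RInt_ext; [|exact H]. intros x. simpl. ring.
Qed.

(* Completing the square: the exponential tilt of [N(m, s^2)] is a multiple of
   [N(m + s^2 v, s^2)]. *)
Lemma improper_RInt_normal_pdf_exp m v :
  improper_RInt (fun x => exp (v * x) * normal_pdf s m x) (exp (v * m + s ^ 2 * v ^ 2 / 2)).
Proof.
  rewrite <- (Rmult_1_r (exp _)).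
  apply improper_RInt_ext
    with (fun x => exp (v * m + s ^ 2 * v ^ 2 / 2) * normal_pdf s (m + s ^ 2 * v) x).
  - intros x. unfold normal_pdf, Rdiv. rewrite <- !Rmult_assoc, <- !exp_plus.
    f_equal. f_equal. field. lra.
  - apply improper_RInt_scal, improper_RInt_normal_pdf.
Qed.

End NormalPdf.

Lemma improper_int_ext f g l :
  (forall x, f x = g x) -> improper_int f l -> improper_int g l.
Proof. rewrite !improper_intP. apply improper_RInt_ext. Qed.

Lemma improper_int_plus f g l1 l2 : improper_int f l1 -> improper_int g l2 ->
  improper_int (fun x => f x + g x) (l1 + l2).
Proof. rewrite !improper_intP. apply improper_RInt_plus. Qed.

Lemma improper_int_scal c f l :
  improper_int f l -> improper_int (fun x => c * f x) (c * l).
Proof. rewrite !improper_intP. apply improper_RInt_scal. Qed.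

Lemma improper_int_le f g l1 l2 : (forall x, f x <= g x) ->
  improper_int f l1 -> improper_int g l2 -> l1 <= l2.
Proof. rewrite !improper_intP. apply improper_RInt_le. Qed.

Lemma improper_int_normal_pdf s m : 0 < s -> improper_int (normal_pdf s m) 1.
Proof. intros Hs. apply improper_intP, improper_RInt_normal_pdf, Hs. Qed.

Lemma improper_int_normal_pdf_mean s m : 0 < s ->
  improper_int (fun x => x * normal_pdf s m x) m.
Proof. intros Hs. apply improper_intP, improper_RInt_normal_pdf_mean, Hs. Qed.

Lemma improper_int_normal_pdf_exp s m v : 0 < s ->
  improper_int (fun x => exp (v * x) * normal_pdf s m x) (exp (v * m + s ^ 2 * v ^ 2 / 2)).
Proof. intros Hs. apply improper_intP, improper_RInt_normal_pdf_exp, Hs. Qed.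

End RealLine.
Import RealLine.


Lemma iint_ext d : forall F G l, (forall y, F y = G y) -> iint d F l -> iint d G l.
Proof.
  induction d as [|d IH]; simpl; intros F G l E H.
  - rewrite H; apply E.
  - destruct H as [g [Hg Hd]]. exists g; split; [exact Hg|].
    intros x. apply IH with (fun v => F (vcons x v)); auto.
Qed.

Lemma iint_plus d : forall F G l1 l2, iint d F l1 -> iint d G l2 ->
  iint d (fun y => F y + G y) (l1 + l2).
Proof.
  induction d as [|d IH]; simpl; intros F G l1 l2 HF HG.
  - subst; reflexivity.
  - destruct HF as [f [Hf HFd]], HG as [g [Hg HGd]].
    exists (fun x => f x + g x); split; [apply improper_int_plus; assumption|].
    intros x. apply (IH (fun v => F (vcons x v)) (fun v => G (vcons x v))); auto.
Qed.

Lemma iint_scal d : forall c F l, iint d F l -> iint d (fun y => c * F y) (c * l).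
Proof.
  induction d as [|d IH]; simpl; intros c F l HF.
  - subst; reflexivity.
  - destruct HF as [f [Hf HFd]].
    exists (fun x => c * f x); split; [apply improper_int_scal, Hf|].
    intros x. apply (IH c (fun v => F (vcons x v))), HFd.
Qed.

Lemma iint_le d : forall F G l1 l2, (forall y, F y <= G y) ->
  iint d F l1 -> iint d G l2 -> l1 <= l2.
Proof.
  induction d as [|d IH]; simpl; intros F G l1 l2 HFG HF HG.
  - subst; apply HFG.
  - destruct HF as [f [Hf HFd]], HG as [g [Hg HGd]].
    apply (improper_int_le f g); [|exact Hf | exact Hg].
    intros x. apply (IH (fun v => F (vcons x v)) (fun v => G (vcons x v))); auto.
Qed.

Lemma iint_succ_mul d f G c l : improper_int f c -> iint d G l ->
  iint (S d) (fun y => f (y O) * G (fun i => y (S i))) (c * l).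
Proof.
  intros Hf HG. exists (fun x => f x * l). split.
  - apply improper_int_ext with (fun x => l * f x); [intros; ring|].
    rewrite Rmult_comm. apply improper_int_scal, Hf.
  - intros x. exact (iint_scal d (f x) G l HG).
Qed.

Lemma iint_sum d (F : nat -> (nat -> R) -> R) (l : nat -> R) n :
  (forall j, (j <= n)%nat -> iint d (F j) (l j)) ->
  iint d (fun y => sum_f_R0 (fun j => F j y) n) (sum_f_R0 l n).
Proof.
  induction n as [|n IH]; simpl; intros HF.
  - apply HF; lia.
  - apply iint_plus; [apply IH; intros; apply HF; lia | apply HF; lia].
Qed.

Lemma inner_succ d u v :
  inner (S d) u v = u O * v O + inner d (fun i => u (S i)) (fun i => v (S i)).
Proof.
  destruct d as [|d]; [simpl; ring|].
  unfold inner. rewrite decomp_sum by lia. reflexivity.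
Qed.

Lemma inner_comm d : forall u v, inner d u v = inner d v u.
Proof. induction d as [|d IH]; intros; [reflexivity|]. rewrite !inner_succ, IH. ring. Qed.

Lemma inner_linl d : forall p q u v w,
  inner d (fun i => p * u i + q * v i) w = p * inner d u w + q * inner d v w.
Proof. induction d as [|d IH]; intros; [simpl; ring|]. rewrite !inner_succ, IH. ring. Qed.

Lemma inner_scall d : forall c u v, inner d (fun i => c * u i) v = c * inner d u v.
Proof. induction d as [|d IH]; intros; [simpl; ring|]. rewrite !inner_succ, IH. ring. Qed.

Lemma inner_oppl d : forall u v, inner d (fun i => - u i) v = - inner d u v.
Proof. induction d as [|d IH]; intros; [simpl; ring|]. rewrite !inner_succ, IH. ring. Qed.

Lemma inner_opp2 d u v : inner d (fun i => - u i) (fun i => - v i) = inner d u v.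
Proof. rewrite inner_oppl, inner_comm, inner_oppl, inner_comm. ring. Qed.

Lemma inner_ge0 d : forall u, 0 <= inner d u u.
Proof.
  induction d as [|d IH]; intros u; [simpl; lra|].
  rewrite inner_succ. pose proof (IH (fun i => u (S i))). nra.
Qed.

Lemma sqr_le_inner d : forall u i, (i < d)%nat -> u i * u i <= inner d u u.
Proof.
  induction d as [|d IH]; intros u i Hi; [lia|].
  rewrite inner_succ. destruct i as [|i].
  - pose proof (inner_ge0 d (fun j => u (S j))). lra.
  - pose proof (IH (fun j => u (S j)) i ltac:(lia)). simpl in *. nra.
Qed.

Lemma inner_self_gt0 d u : (exists i, (i < d)%nat /\ u i <> 0) -> 0 < inner d u u.
Proof.
  intros [i [Hi Hu]]. pose proof (sqr_le_inner d u i Hi).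
  assert (0 < u i * u i) by (apply Rsqr_pos_lt, Hu). lra.
Qed.

Lemma norm_sqr d u : norm d u ^ 2 = inner d u u.
Proof. apply pow2_sqrt, inner_ge0. Qed.

Lemma iint_inner_l d (F : nat -> (nat -> R) -> R) (l v : nat -> R) :
  (forall j, (j < d)%nat -> iint d (F j) (l j)) ->
  iint d (fun y => inner d (fun j => F j y) v) (inner d l v).
Proof.
  intros HF. destruct d as [|d]; [reflexivity|].
  apply iint_ext with (fun y => sum_f_R0 (fun j => v j * F j y) d).
  { intros y. simpl. apply sum_eq. intros; ring. }
  replace (inner (S d) l v) with (sum_f_R0 (fun j => v j * l j) d)
    by (simpl; apply sum_eq; intros; ring).
  apply iint_sum. intros j Hj. apply iint_scal, HF. lia.
Qed.

Lemma gauss_density_zero s m y : gauss_density 0 s m y = 1.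
Proof.
  unfold gauss_density, inner. replace (- 0 / (2 * s ^ 2)) with 0 by (unfold Rdiv; ring).
  rewrite exp_0. simpl. field.
Qed.

Lemma gauss_density_succ d s m y :
  gauss_density (S d) s m y
  = normal_pdf s (m O) (y O) * gauss_density d s (fun i => m (S i)) (fun i => y (S i)).
Proof.
  unfold gauss_density, normal_pdf. rewrite inner_succ.
  simpl pow. unfold Rdiv. rewrite Ropp_plus_distr, Rmult_plus_distr_r, exp_plus.
  rewrite (Rinv_mult (sqrt _) (_ ^ d)). ring.
Qed.

Lemma gauss_density_ge0 d s m y : 0 < s -> 0 <= gauss_density d s m y.
Proof.
  intros Hs. unfold gauss_density. left. apply Rdiv_lt_0_compat; [apply exp_pos|].
  apply pow_lt, normal_const_gt0, Hs.
Qed.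

Section GaussianMoments.
Variable s : R.
Hypothesis s_gt0 : 0 < s.

Lemma iint_gauss_density d : forall m, iint d (gauss_density d s m) 1.
Proof.
  induction d as [|d IH]; intros m.
  - symmetry. apply gauss_density_zero.
  - eapply iint_ext; [intros y; symmetry; apply gauss_density_succ|].
    rewrite <- (Rmult_1_l 1) at 1.
    apply iint_succ_mul; [apply improper_int_normal_pdf, s_gt0 | apply IH].
Qed.

Lemma iint_gauss_density_coord d : forall m j, (j < d)%nat ->
  iint d (fun y => y j * gauss_density d s m y) (m j).
Proof.
  induction d as [|d IH]; intros m j Hj; [lia|].
  destruct j as [|j].
  - rewrite <- (Rmult_1_r (m O)).
    eapply iint_ext; [|apply iint_succ_mul;
      [apply improper_int_normal_pdf_mean, s_gt0
      | apply (iint_gauss_density d (fun i => m (S i)))]].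
    intros y. rewrite gauss_density_succ. simpl. ring.
  - rewrite <- (Rmult_1_l (m (S j))).
    eapply iint_ext; [|apply iint_succ_mul;
      [apply (improper_int_normal_pdf s (m O)), s_gt0 | apply (IH (fun i => m (S i)) j); lia]].
    intros y. rewrite gauss_density_succ. simpl. ring.
Qed.

Lemma iint_gauss_density_exp_inner d : forall m v,
  iint d (fun y => exp (inner d v y) * gauss_density d s m y)
    (exp (inner d v m + s ^ 2 * inner d v v / 2)).
Proof.
  induction d as [|d IH]; intros m v.
  - cbn [iint]. rewrite gauss_density_zero, Rmult_1_r. unfold inner. f_equal. field.
  - replace (exp (inner (S d) v m + s ^ 2 * inner (S d) v v / 2))
      with (exp (v O * m O + s ^ 2 * v O ^ 2 / 2)
            * exp (inner d (fun i => v (S i)) (fun i => m (S i))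
                   + s ^ 2 * inner d (fun i => v (S i)) (fun i => v (S i)) / 2))
      by (rewrite <- exp_plus, !inner_succ; f_equal; field).
    eapply iint_ext; [|apply iint_succ_mul;
      [apply improper_int_normal_pdf_exp, s_gt0 | apply IH]].
    intros y. rewrite gauss_density_succ, inner_succ, exp_plus. simpl. ring.
Qed.

End GaussianMoments.

Lemma inner_ext d u v u' v' : (forall i, u i = u' i) -> (forall i, v i = v' i) ->
  inner d u v = inner d u' v'.
Proof.
  intros Hu Hv. destruct d as [|d]; [reflexivity|].
  apply sum_eq. intros i _. rewrite Hu, Hv. reflexivity.
Qed.

Lemma omega_opp t : omega (- t) = 1 - omega t.
Proof.
  unfold omega. replace (- (2 * - t)) with (2 * t) by ring.
  pose proof (exp_pos (2 * t)) as He.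
  rewrite exp_Ropp. field. split; lra.
Qed.

Lemma omega_bounds t : 0 < omega t < 1.
Proof.
  unfold omega. pose proof (exp_pos (- (2 * t))). split.
  - apply Rinv_0_lt_compat; lra.
  - rewrite <- Rinv_1. apply Rinv_lt_contravar; lra.
Qed.

Lemma omega_le_exp t lam : 0 <= lam <= 1 -> omega t <= exp (2 * lam * t).
Proof.
  intros Hlam. pose proof (omega_bounds t). destruct (Rle_or_lt 0 t) as [Ht | Ht].
  - apply Rle_trans with 1; [lra|]. rewrite <- exp_0. apply exp_le_compat. nra.
  - apply Rle_trans with (exp (2 * t)); [|apply exp_le_compat; nra].
    unfold omega. rewrite <- (Rinv_inv (exp (2 * t))), <- exp_Ropp.
    pose proof (exp_pos (- (2 * t))). apply Rinv_le_contravar; lra.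
Qed.

(* This is [exp x >= 1 + x] at [x = mu z - 1]. *)
Lemma le_exp_mul z mu : 0 < mu -> z <= / (exp 1 * mu) * exp (mu * z).
Proof.
  intros Hmu. pose proof (exp_ineq1_le (mu * z - 1)). pose proof (exp_pos 1).
  assert (E : exp (mu * z) = exp (mu * z - 1) * exp 1) by (rewrite <- exp_plus; f_equal; ring).
  rewrite E. replace (/ (exp 1 * mu) * (exp (mu * z - 1) * exp 1)) with (exp (mu * z - 1) / mu)
    by (field; lra).
  apply (Rmult_le_reg_l mu); [exact Hmu|]. replace (mu * (exp (mu * z - 1) / mu))
    with (exp (mu * z - 1)) by (field; lra). lra.
Qed.

Lemma mul_omega_ge z t mu lam : 0 < mu -> 0 <= lam <= 1 ->
  z - / (exp 1 * mu) * exp (mu * z - 2 * lam * t) <= z * omega t.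
Proof.
  intros Hmu Hlam. pose proof (omega_bounds t).
  assert (HK : 0 < / (exp 1 * mu)) by (apply Rinv_0_lt_compat; pose proof (exp_pos 1); nra).
  replace (mu * z - 2 * lam * t) with (mu * z + 2 * lam * (- t)) by ring. rewrite exp_plus.
  pose proof (exp_pos (mu * z)). pose proof (exp_pos (2 * lam * (- t))).
  destruct (Rle_or_lt z 0) as [Hz | Hz].
  - assert (0 <= / (exp 1 * mu) * (exp (mu * z) * exp (2 * lam * - t)))
      by (apply Rmult_le_pos; nra).
    nra.
  - pose proof (le_exp_mul z mu Hmu). pose proof (omega_le_exp (- t) lam Hlam).
    rewrite omega_opp in *.
    assert (z * (1 - omega t) <= / (exp 1 * mu) * exp (mu * z) * exp (2 * lam * - t)).
    { apply Rmult_le_compat; nra. }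
    nra.
Qed.

Lemma mul_omega_ge_opp z t mu lam : 0 < mu -> 0 <= lam <= 1 ->
  - (/ (exp 1 * mu) * exp (- (mu * z - 2 * lam * t))) <= z * omega t.
Proof.
  intros Hmu Hlam. pose proof (mul_omega_ge (- z) (- t) mu lam Hmu Hlam) as H.
  rewrite omega_opp in H.
  replace (mu * - z - 2 * lam * - t) with (- (mu * z - 2 * lam * t)) in H by ring.
  lra.
Qed.

Section EMLowerBound.
Variables (d : nat) (sigma : R) (theta_star theta m : nat -> R).
Hypothesis sigma_gt0 : 0 < sigma.

Lemma EM_integrand_ge mu lam w y : 0 < mu -> 0 <= lam <= 1 ->
  inner d w y = mu * inner d y theta_star - 2 * lam * (inner d theta y / sigma ^ 2) ->
  inner d y theta_star * gauss_density d sigma theta_star y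
  + - / (exp 1 * mu) * (exp (inner d w y) * gauss_density d sigma theta_star y)
  + - / (exp 1 * mu) * (exp (inner d (fun i => - w i) y)
                        * gauss_density d sigma (fun i => - theta_star i) y)
  <= inner d (fun j => 2 * (y j * omega (inner d theta y / sigma ^ 2))
                       * mix_density d sigma theta_star y) theta_star.
Proof.
  intros Hmu Hlam Hw.
  set (Z := inner d y theta_star). set (t := inner d theta y / sigma ^ 2).
  set (gp := gauss_density d sigma theta_star y).
  set (gm := gauss_density d sigma (fun i => - theta_star i) y).
  assert (Hrhs : inner d (fun j => 2 * (y j * omega t) * mix_density d sigma theta_star y)
                   theta_star = Z * omega t * gp + Z * omega t * gm).
  { rewrite (inner_ext d _ theta_star (fun j => (omega t * (gp + gm)) * y j) theta_star);
      [|intros; unfold mix_density; fold gp gm; field | reflexivity].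
    rewrite inner_scall. fold Z. ring. }
  rewrite Hrhs, inner_oppl, Hw. fold Z t.
  pose proof (mul_omega_ge Z t mu lam Hmu Hlam).
  pose proof (mul_omega_ge_opp Z t mu lam Hmu Hlam).
  pose proof (gauss_density_ge0 d sigma theta_star y sigma_gt0) as Hgp. fold gp in Hgp.
  pose proof (gauss_density_ge0 d sigma (fun i => - theta_star i) y sigma_gt0) as Hgm.
  fold gm in Hgm.
  assert ((Z - / (exp 1 * mu) * exp (mu * Z - 2 * lam * t)) * gp <= Z * omega t * gp)
    by (apply Rmult_le_compat_r; assumption).
  assert (- (/ (exp 1 * mu) * exp (- (mu * Z - 2 * lam * t))) * gm <= Z * omega t * gm)
    by (apply Rmult_le_compat_r; assumption).
  lra.
Qed.

Hypothesis m_EM : is_EM d sigma theta_star theta m.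

Lemma inner_EM_ge mu lam : 0 < mu -> 0 <= lam <= 1 ->
  let c := 2 * lam / sigma ^ 2 in
  let S := inner d theta_star theta_star in
  let P := inner d theta theta_star in
  let Q := inner d theta theta in
  S - 2 / (exp 1 * mu)
      * exp ((mu * S - c * P) + sigma ^ 2 * (mu * (mu * S - c * P) - c * (mu * P - c * Q)) / 2)
  <= inner d m theta_star.
Proof.
  intros Hmu Hlam c S P Q.
  set (w := fun i => mu * theta_star i + - c * theta i).
  set (K := / (exp 1 * mu)).
  assert (Hw_y : forall y, inner d w y
                           = mu * inner d y theta_star - 2 * lam * (inner d theta y / sigma ^ 2)).
  { intros y. unfold w. rewrite inner_linl, (inner_comm d theta_star y). unfold c. field. lra. }
  assert (Hw_ts : inner d w theta_star = mu * S - c * P)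
    by (unfold w; rewrite inner_linl; fold S P; ring).
  assert (Hw_w : inner d w w = mu * (mu * S - c * P) - c * (mu * P - c * Q)).
  { unfold w at 1. rewrite inner_linl, (inner_comm d theta_star), (inner_comm d theta).
    fold w. rewrite Hw_ts. unfold w. rewrite inner_linl, (inner_comm d theta_star theta).
    fold P Q. ring. }
  set (M := exp (inner d w theta_star + sigma ^ 2 * inner d w w / 2)).
  assert (Hlower : iint d (fun y =>
      inner d y theta_star * gauss_density d sigma theta_star y
      + - K * (exp (inner d w y) * gauss_density d sigma theta_star y)
      + - K * (exp (inner d (fun i => - w i) y)
               * gauss_density d sigma (fun i => - theta_star i) y))
    (S + - K * M + - K * M)).
  { apply iint_plus; [apply iint_plus|];
      [| apply iint_scal, iint_gauss_density_exp_inner, sigma_gt0 |].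
    - eapply iint_ext;
        [|apply (iint_inner_l d (fun j y => y j * gauss_density d sigma theta_star y))].
      + intros y. rewrite (Rmult_comm (inner d y theta_star)), <- inner_scall.
        apply inner_ext; intros; [ring | reflexivity].
      + intros j Hj. apply iint_gauss_density_coord; assumption.
    - unfold M. rewrite <- (inner_opp2 d w theta_star), <- (inner_opp2 d w w).
      apply iint_scal, iint_gauss_density_exp_inner, sigma_gt0. }
  assert (Hupper := iint_inner_l d _ m theta_star m_EM).
  pose proof (iint_le d _ _ _ _ (fun y => EM_integrand_ge mu lam w y Hmu Hlam (Hw_y y))
                Hlower Hupper).
  unfold M in *. rewrite Hw_ts, Hw_w in *. unfold K in *. unfold Rdiv. lra.
Qed.

End EMLowerBound.

Lemma ln_two_div_ge_half b : 0 < b < 1 -> 1 / 2 <= ln (2 / (1 - b)).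
Proof.
  intros Hb. pose proof ln_lt_2.
  assert (ln 2 < ln (2 / (1 - b))).
  { apply ln_increasing; [lra|]. apply (Rmult_lt_reg_r (1 - b)); [lra|].
    unfold Rdiv. rewrite Rmult_assoc, Rinv_l by lra. nra. }
  lra.
Qed.

Lemma inv_sub_half_le T X L : 1 / 2 <= L -> 5 * L <= X -> X <= T -> / (2 * T) - X / 2 <= - L.
Proof.
  intros HL HX HT.
  assert (/ (2 * T) <= / 5) by (apply Rinv_le_contravar; lra).
  lra.
Qed.

Lemma tilt_exponent_le S s a r P Q : 0 < S -> 0 < s -> 0 < a -> 0 < r ->
  a * S <= P -> Q <= r ^ 2 * S ->
  let c := a / (r ^ 2 * s ^ 2) in
  (/ S * S - c * P) + s ^ 2 * (/ S * (/ S * S - c * P) - c * (/ S * P - c * Q)) / 2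
  <= 1 + / (2 * (S / s ^ 2)) - a ^ 2 * S / (r ^ 2 * s ^ 2) / 2.
Proof.
  intros HS Hs Ha Hr HP HQ c.
  assert (Hs2 : 0 < s ^ 2) by (apply pow_lt, Hs).
  assert (Hr2 : 0 < r ^ 2) by (apply pow_lt, Hr).
  assert (Hc : 0 < c) by (apply Rdiv_lt_0_compat; nra).
  assert (E : (/ S * S - c * P) + s ^ 2 * (/ S * (/ S * S - c * P) - c * (/ S * P - c * Q)) / 2
              = 1 - c * P + s ^ 2 / (2 * S) - s ^ 2 * c * P / S + s ^ 2 * c ^ 2 * Q / 2)
    by (field; lra).
  assert (EP : c * (a * S) = a ^ 2 * S / (r ^ 2 * s ^ 2)) by (unfold c; field; lra).
  assert (EQ : s ^ 2 * c ^ 2 * (r ^ 2 * S) / 2 = a ^ 2 * S / (r ^ 2 * s ^ 2) / 2)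
    by (unfold c; field; lra).
  assert (HcP : c * (a * S) <= c * P) by (apply Rmult_le_compat_l; lra).
  assert (HcP0 : 0 <= s ^ 2 * c * P / S).
  { unfold Rdiv. apply Rmult_le_pos; [apply Rmult_le_pos; nra|].
    left; apply Rinv_0_lt_compat, HS. }
  assert (HcQ : s ^ 2 * c ^ 2 * Q / 2 <= s ^ 2 * c ^ 2 * (r ^ 2 * S) / 2).
  { apply Rmult_le_compat_r; [lra|]. apply Rmult_le_compat_l; [|exact HQ].
    apply Rmult_le_pos; [lra | apply pow2_ge_0]. }
  replace (/ (2 * (S / s ^ 2))) with (s ^ 2 / (2 * S)) by (field; lra).
  lra.
Qed.

Lemma tilt_exponent_le_log S s a r P Q L : 0 < S -> 0 < s -> 0 < a < 1 -> 1 <= r ->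
  a * S <= P -> Q <= r ^ 2 * S -> 1 / 2 <= L -> 5 * L <= a ^ 2 * S / (r ^ 2 * s ^ 2) ->
  let c := a / (r ^ 2 * s ^ 2) in
  (/ S * S - c * P) + s ^ 2 * (/ S * (/ S * S - c * P) - c * (/ S * P - c * Q)) / 2
  <= 1 - L.
Proof.
  intros HS Hs Ha Hr HP HQ HL HX c.
  assert (Hs2 : 0 < s ^ 2) by (apply pow_lt, Hs).
  assert (Har : a ^ 2 <= r ^ 2) by (simpl; nra).
  assert (Hrs : 0 < r ^ 2 * s ^ 2) by (apply Rmult_lt_0_compat; [simpl; nra | exact Hs2]).
  assert (HXT : a ^ 2 * S / (r ^ 2 * s ^ 2) <= S / s ^ 2).
  { replace (S / s ^ 2) with (r ^ 2 * S / (r ^ 2 * s ^ 2)) by (field; simpl; nra).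
    unfold Rdiv. apply Rmult_le_compat_r; [left; apply Rinv_0_lt_compat, Hrs|].
    apply Rmult_le_compat_r; lra. }
  pose proof (tilt_exponent_le S s a r P Q HS Hs ltac:(lra) ltac:(lra) HP HQ).
  pose proof (inv_sub_half_le _ _ L HL HX HXT).
  cbv zeta in *. unfold c. lra.
Qed.

Lemma le_div_sqrt_sqr r x q : 0 <= r -> 0 < q -> r <= x / sqrt q -> r ^ 2 * q <= x ^ 2.
Proof.
  intros Hr Hq Hrx. assert (Hsq : 0 < sqrt q) by (apply sqrt_lt_R0, Hq).
  assert (H : r * sqrt q <= x).
  { apply (Rmult_le_reg_r (/ sqrt q)); [apply Rinv_0_lt_compat, Hsq|].
    rewrite Rmult_assoc, Rinv_r by lra. unfold Rdiv in Hrx. lra. }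
  rewrite <- (pow2_sqrt q) by lra. rewrite <- Rpow_mult_distr.
  apply pow_incr. split; [nra | exact H].
Qed.

Lemma tilt_remainder_le S E b : 0 < S -> 0 < b < 1 -> E <= 1 - ln (2 / (1 - b)) ->
  2 / (exp 1 * / S) * exp E <= (1 - b) * S.
Proof.
  intros HS Hb HE. pose proof (exp_pos 1).
  assert (HeL : exp (1 - ln (2 / (1 - b))) = exp 1 * ((1 - b) / 2)).
  { unfold Rminus. rewrite exp_plus, exp_Ropp, exp_ln by (apply Rdiv_lt_0_compat; lra).
    field. lra. }
  pose proof (exp_le_compat _ _ HE) as HexpE. rewrite HeL in HexpE.
  replace (2 / (exp 1 * / S) * exp E) with (2 * S / exp 1 * exp E) by (field; lra).
  apply Rle_trans with (2 * S / exp 1 * (exp 1 * ((1 - b) / 2))).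
  - apply Rmult_le_compat_l; [|exact HexpE].
    unfold Rdiv. apply Rmult_le_pos; [lra | left; apply Rinv_0_lt_compat; lra].
  - right. field. lra.
Qed.

Lemma div_in_unit x y : 0 < x < y -> 0 < x / y < 1.
Proof.
  intros Hxy. split; [apply Rdiv_lt_0_compat; lra|].
  apply (Rmult_lt_reg_r y); [lra|]. unfold Rdiv. rewrite Rmult_assoc, Rinv_l; lra.
Qed.

Lemma div_two_sqr_in_unit a r : 0 < a < 1 -> 1 <= r -> 0 <= a / (2 * r ^ 2) <= 1.
Proof.
  intros Ha Hr. assert (0 < / (2 * r ^ 2) <= 1).
  { split; [apply Rinv_0_lt_compat; nra|].
    rewrite <- Rinv_1. apply Rinv_le_contravar; nra. }
  unfold Rdiv. split; nra.
Qed.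

Lemma inner_le_of_norm_le d u v r :
  norm d u <= r * norm d v -> inner d u u <= r ^ 2 * inner d v v.
Proof.
  intros Huv. rewrite <- !norm_sqr, <- Rpow_mult_distr.
  apply pow_incr. split; [apply sqrt_pos | exact Huv].
Qed.

Lemma snr_condition_sqr d sigma theta_star a r L : 0 < sigma -> 1 <= r -> 0 < L ->
  r <= a * snr d sigma theta_star / sqrt (5 * L) ->
  5 * L <= a ^ 2 * inner d theta_star theta_star / (r ^ 2 * sigma ^ 2).
Proof.
  intros Hsigma Hr HL Hsnr. set (S := inner d theta_star theta_star).
  pose proof (le_div_sqrt_sqr r _ (5 * L) ltac:(lra) ltac:(lra) Hsnr) as H.
  unfold snr, norm in H. fold S in H.
  replace ((a * (sqrt S / sigma)) ^ 2) with (a ^ 2 * sqrt S ^ 2 / sigma ^ 2) in H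
    by (field; lra).
  rewrite pow2_sqrt in H by (apply inner_ge0).
  assert (Hr2 : 0 < r ^ 2) by nra.
  apply (Rmult_le_reg_l (r ^ 2)); [exact Hr2|].
  replace (r ^ 2 * (a ^ 2 * S / (r ^ 2 * sigma ^ 2))) with (a ^ 2 * S / sigma ^ 2)
    by (field; split; lra).
  lra.
Qed.

Theorem lemma2 (d : nat) (sigma : R) (theta_star : nat -> R) (a r kappa1 : R) :
  (1 <= d)%nat -> 0 < sigma ->
  (exists i, (i < d)%nat /\ theta_star i <> 0) ->
  0 < a < 1 -> 1 <= r -> a < kappa1 < 1 ->
  r <= a * snr d sigma theta_star / sqrt (5 * ln (2 / (1 - a / kappa1))) ->
  forall theta : nat -> R, in_D d a r theta_star theta ->
  forall m : nat -> R, is_EM d sigma theta_star theta m ->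
  inner d m theta_star >= (a / kappa1) * norm d theta_star ^ 2.
Proof.
  intros _ Hsigma Hts Ha Hr Hk Hsnr theta [HH HB] m HEM.
  unfold in_H in HH. unfold in_B in HB. rewrite norm_sqr in HH |- *.
  pose proof (div_in_unit a kappa1 ltac:(lra)) as Hb.
  pose proof (ln_two_div_ge_half _ Hb) as HL.
  pose proof (snr_condition_sqr d sigma theta_star a r (ln (2 / (1 - a / kappa1)))
                Hsigma Hr ltac:(lra) Hsnr) as HX.
  pose proof (inner_le_of_norm_le d theta theta_star r HB) as HQ.
  set (S := inner d theta_star theta_star) in *.
  assert (HS : 0 < S) by (apply inner_self_gt0, Hts).
  pose proof (inner_EM_ge d sigma theta_star theta m Hsigma HEM (/ S) (a / (2 * r ^ 2))
                ltac:(apply Rinv_0_lt_compat, HS) (div_two_sqr_in_unit a r Ha Hr)) as Hem.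
  cbv zeta in Hem. fold S in Hem.
  replace (2 * (a / (2 * r ^ 2)) / sigma ^ 2) with (a / (r ^ 2 * sigma ^ 2)) in Hem
    by (field; split; [lra | nra]).
  pose proof (tilt_remainder_le S _ (a / kappa1) HS Hb
    (tilt_exponent_le_log S sigma a r (inner d theta theta_star) (inner d theta theta) _
       HS Hsigma Ha Hr ltac:(lra) HQ HL HX)).
  lra.
Qed.
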